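(* Let $N=p^l$ with $p$ an odd prime, $l\ge1$, and $N\equiv1\pmod 4$. Let $i\in\mathbb{F}_N$ be one of the two elements with $i^2=-1$, and fix $\nu\in\bar{Q}$. For $\Delta\in\{1,-1\}$ and $t\in\mathbb{F}_N$ let $C_{\Delta,t}$ be the conjugacy class in $\mathrm{ESL}(2,\mathbb{F}_N)$ of $\begin{pmatrix}0&-\Delta\\1&t\end{pmatrix}$; for $t\in\{\pm2,\pm2i\}$ let $\bar{C}_t$ be the conjugacy class of $\begin{pmatrix}0&-\frac{t^2}{4\nu}\\ \nu&t\end{pmatrix}$ and $D_t$ the conjugacy class of $\begin{pmatrix}t/2&0\\0&t/2\end{pmatrix}$. Then the conjugacy classes of $\mathrm{ESL}(2,\mathbb{F}_N)$ are exactly the $2N$ classes $C_{\Delta,t}$ ($\Delta=\pm1$, $t\in\mathbb{F}_N$) together with the $8$ classes $\bar{C}_{\pm2},\bar{C}_{\pm2i},D_{\pm2},D_{\pm2i}$, and these $2N+8$ classes are pairwise distinct. Moreover, for $F=\begin{pmatrix}\alpha&\beta\\\gamma&\delta\end{pmatrix}\in\mathrm{ESL}(2,\mathbb{F}_N)$ with $\Delta=\det F$, $t=\operatorname{tr}F$: (1) if $t^2-4\Delta\neq0$ then $F\in C_{\Delta,t}$; (2) if $t^2-4\Delta=0$ then $F\in C_{\Delta,t}$ if $\beta\in Q$ or $\gamma\in Q$; $F\in\bar{C}_t$ if $\beta\in\bar{Q}$ or $\gamma\in\bar{Q}$; and $F\in D_t$ if $\beta=\gamma=0$. (When $t^2-4\Delta=0$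 it cannot happen that one of $\beta,\gamma$ lies in $Q$ and the other in $\bar{Q}$.)
   Context: $\mathbb{F}_N$ is the finite field with $N$ elements and $\mathbb{F}_N^{*}$ its nonzero elements. $Q=\{x\in\mathbb{F}_N^{*}: x=y^2\text{ for some }y\in\mathbb{F}_N^{*}\}$ and $\bar{Q}=\mathbb{F}_N^{*}\setminus Q$. $\mathrm{ESL}(2,\mathbb{F}_N)$ is the group of $2\times2$ matrices over $\mathbb{F}_N$ with determinant $\pm1$; conjugacy is taken within this group. *)

From HB Require Import structures.
From mathcomp Require Import all_boot all_order all_algebra.
Set Implicit Arguments. Unset Strict Implicit. Unset Printing Implicit Defensive.
Import GRing.Theory.
Local Open Scope ring_scope.

Section ESL.
Variable F : finFieldType.

Definition isQ (x : F) : bool := [exists y : F, (y != 0) && (x == y ^+ 2)].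
Definition isQbar (x : F) : bool := (x != 0) && ~~ isQ x.

Definition mx2 (a b c d : F) : 'M[F]_2 :=
  \matrix_(r < 2, s < 2)
    if r == ord0 then (if s == ord0 then a else b) else (if s == ord0 then c else d).

Definition i0 : 'I_2 := ord0.
Definition i1 : 'I_2 := ord_max.

Definition inESL (A : 'M[F]_2) : bool := (\det A == 1) || (\det A == -1).
Definition ESLset : {set 'M[F]_2} := [set A | inESL A].

Definition conj_class (A : 'M[F]_2) : {set 'M[F]_2} :=
  [set B | [exists P : 'M[F]_2, inESL P && (B == invmx P *m A *m P)]].

Definition ESL_classes : {set {set 'M[F]_2}} := [set conj_class A | A in ESLset].

Definition Cc (D t : F) : {set 'M[F]_2} := conj_class (mx2 0 (- D) 1 t).
Definition Cbar (nu t : F) : {set 'M[F]_2} :=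
  conj_class (mx2 0 (- (t ^+ 2 / (4%:R * nu))) nu t).
Definition Dc (t : F) : {set 'M[F]_2} := conj_class (mx2 (t / 2%:R) 0 0 (t / 2%:R)).

Definition signs : {set F} := [set 1; -1].
Definition T4 (i : F) : {set F} := [set 2%:R; - 2%:R; 2%:R * i; - (2%:R * i)].

End ESL.

From HB Require Import structures.
From mathcomp Require Import all_boot all_order all_algebra all_field.
From mathcomp Require Import ring.
Import GRing.Theory.
Local Open Scope ring_scope.

(* For A = [[a, b], [c, e]] and any vector (x, y), the matrix
   P(x, y) = [[y c - x e, x b - y a], [x, y]] satisfies P A = C P, where C is the
   companion matrix of the characteristic polynomial of A, and
   det P = q_A(x, y) := c y^2 + (a - e) x y - b x^2.  Hence A lies in C_{det A, tr A}
   as soon as q_A represents a nonzero square; in the degenerate case t^2 = 4 D the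
   representative of Cbar_t is conjugate to C by diag(nu, 1), so A lies in Cbar_t as soon
   as q_A represents nu times a nonzero square.  Completing the square,
   4 c q_A = (2 c y + (a - e) x)^2 - disc x^2, shows that a nondegenerate form represents
   a nonzero square (-1 is a square and a product of two nonsquares of a finite field is a
   square), and that a degenerate one represents c or -b.  The same identity shows that in
   the degenerate case the square class of the lower-left entry is an ESL-conjugacy
   invariant, which separates C_t from Cbar_t; determinant, trace and the fact that scalar
   classes are singletons separate all other pairs of classes. *)

Lemma card_setU_disjoint (T : finType) (A B : {set T}) :
  (forall x, x \in A -> x \notin B) -> #|A :|: B| = (#|A| + #|B|)%N.
Proof.
move=> dAB; rewrite cardsU (_ : A :&: B = set0) ?cards0 ?subn0 //.
by apply/setP=> x; rewrite inE in_set0; case xA: (x \in A) => //=; apply/negbTE/dAB.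
Qed.

Section ConjugacyClasses.
Variable F : finFieldType.
Set Implicit Arguments. Unset Strict Implicit.

Lemma ord2P (P : 'I_2 -> Prop) : P i0 -> P i1 -> forall r, P r.
Proof.
move=> h0 h1 [[|[|r]] hr] //.
- by have -> : Ordinal hr = i0 by apply: val_inj.
- by have -> : Ordinal hr = i1 by apply: val_inj.
Qed.

Lemma mx2_eta (A : 'M[F]_2) : A = mx2 (A i0 i0) (A i0 i1) (A i1 i0) (A i1 i1).
Proof. by apply/matrixP; elim/ord2P; elim/ord2P; rewrite mxE. Qed.

Lemma mx2_inj (a b c d a' b' c' d' : F) :
  mx2 a b c d = mx2 a' b' c' d' -> [/\ a = a', b = b', c = c' & d = d'].
Proof.
move=> e; have entry (r s : 'I_2) := congr1 (fun M : 'M[F]_2 => M r s) e.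
by move: (entry i0 i0) (entry i0 i1) (entry i1 i0) (entry i1 i1); rewrite !mxE.
Qed.

Lemma mx2_mul (a b c d a' b' c' d' : F) : mx2 a b c d *m mx2 a' b' c' d' =
  mx2 (a * a' + b * c') (a * b' + b * d') (c * a' + d * c') (c * b' + d * d').
Proof.
apply/matrixP; elim/ord2P; elim/ord2P;
by rewrite !mxE !big_ord_recl big_ord0 !mxE /= addr0.
Qed.

Lemma det_mx2 (a b c d : F) : \det (mx2 a b c d) = a * d - b * c.
Proof.
rewrite (expand_det_row _ i0) !big_ord_recl big_ord0 /cofactor !det_mx11 !mxE /=.
by rewrite expr0 expr1 mul1r addr0 mulN1r mulrN.
Qed.

Lemma tr_mx2 (a b c d : F) : \tr (mx2 a b c d) = a + d.
Proof. by rewrite /mxtrace !big_ord_recl big_ord0 !mxE /= addr0. Qed.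

Lemma mx2_scalar (l : F) : mx2 l 0 0 l = l%:M.
Proof. by apply/matrixP; elim/ord2P; elim/ord2P; rewrite !mxE. Qed.

(* B = P^-1 A P for some P in ESL(2, F), stated without inverses. *)
Definition similar (A B : 'M[F]_2) := exists2 P : 'M[F]_2, inESL P & P *m B = A *m P.

Lemma inESL_det_neq0 (P : 'M[F]_2) : inESL P -> \det P != 0.
Proof. by case/orP=> /eqP ->; rewrite ?oppr_eq0 oner_eq0. Qed.

Lemma inESL_unit (P : 'M[F]_2) : inESL P -> P \in unitmx.
Proof. by move=> hP; rewrite unitmxE unitfE inESL_det_neq0. Qed.

Lemma inESL1 : inESL (1%:M : 'M[F]_2).
Proof. by rewrite /inESL det1 eqxx. Qed.

Lemma inESL_mul (P R : 'M[F]_2) : inESL P -> inESL R -> inESL (P *m R).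
Proof.
rewrite /inESL det_mulmx => /orP[] /eqP -> /orP[] /eqP ->;
by rewrite ?mulr1 ?mulrN1 ?opprK eqxx ?orbT.
Qed.

Lemma inESL_inv (P : 'M[F]_2) : inESL P -> inESL (invmx P).
Proof.
by rewrite /inESL det_inv => /orP[] /eqP ->; rewrite ?invr1 ?invrN1 eqxx ?orbT.
Qed.

Lemma conj_classP (A B : 'M[F]_2) : reflect (similar A B) (B \in conj_class A).
Proof.
rewrite inE; apply: (iffP existsP) => [[P /andP [hP /eqP ->]] | [P hP hPB]].
  by exists P => //; rewrite !mulmxA mulmxV ?mul1mx ?inESL_unit.
by exists P; rewrite hP -mulmxA -hPB mulKmx ?eqxx // inESL_unit.
Qed.

Lemma similar_refl (A : 'M[F]_2) : similar A A.
Proof. by exists 1%:M; rewrite ?inESL1 ?mul1mx ?mulmx1. Qed.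

Lemma similar_sym (A B : 'M[F]_2) : similar A B -> similar B A.
Proof.
case=> P hP hPB; exists (invmx P); first exact: inESL_inv.
have uP := inESL_unit hP.
by rewrite -(mulKmx uP B) hPB mulmxA mulmxK.
Qed.

Lemma similar_trans (A B C : 'M[F]_2) : similar A B -> similar B C -> similar A C.
Proof.
case=> P hP hPB [R hR hRC]; exists (P *m R); first exact: inESL_mul.
by rewrite -mulmxA hRC mulmxA hPB -mulmxA.
Qed.

Lemma mem_conj_class (A : 'M[F]_2) : A \in conj_class A.
Proof. exact/conj_classP/similar_refl. Qed.

Lemma conj_class_eq (A B : 'M[F]_2) : B \in conj_class A -> conj_class B = conj_class A.
Proof.
move/conj_classP=> hAB; apply/setP=> X.
apply/conj_classP/conj_classP => [|hAX]; first exact: similar_trans.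
exact: similar_trans (similar_sym hAB) hAX.
Qed.

Lemma similar_det (A B : 'M[F]_2) : similar A B -> \det B = \det A.
Proof.
case=> P hP /(congr1 determinant); rewrite !det_mulmx [RHS]mulrC.
by apply: mulfI; apply: inESL_det_neq0.
Qed.

Lemma similar_tr (A B : 'M[F]_2) : similar A B -> \tr B = \tr A.
Proof.
case=> P /inESL_unit uP hPB.
by rewrite -(mulKmx uP B) hPB mulmxA mxtrace_mulC mulmxA mulmxV ?mul1mx.
Qed.

Lemma conj_class_det_tr (A B : 'M[F]_2) :
  conj_class A = conj_class B -> \det A = \det B /\ \tr A = \tr B.
Proof.
move=> eAB; have /conj_classP sBA : A \in conj_class B by rewrite -eAB mem_conj_class.
by rewrite (similar_det sBA) (similar_tr sBA).
Qed.

Lemma similar_scalar (l : F) (B : 'M[F]_2) : similar l%:M B -> B = l%:M.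
Proof.
case=> P /inESL_unit uP hPB.
by rewrite -(mulKmx uP B) hPB -scalar_mxC mulKmx.
Qed.

Lemma scalar_class_lower_left (l : F) (B : 'M[F]_2) :
  B \in conj_class (mx2 l 0 0 l) -> B i1 i0 = 0.
Proof. by rewrite mx2_scalar => /conj_classP/similar_scalar ->; rewrite mxE. Qed.

Lemma mem_conj_class_via (A M C P R : 'M[F]_2) :
  P *m A = C *m P -> R *m M = C *m R -> R \in unitmx -> \det P = \det R ->
  A \in conj_class M.
Proof.
move=> hP hR uR dPR; apply/conj_classP; exists (invmx R *m P).
  rewrite /inESL det_mulmx det_inv dPR mulVf ?eqxx //.
  by rewrite unitmxE unitfE in uR.
by rewrite -mulmxA hP -(mulKmx uR M) hR !mulmxA mulmxK.
Qed.

Definition square (x : F) := exists y, x = y ^+ 2.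

Lemma isQP (x : F) : reflect (x != 0 /\ square x) (isQ x).
Proof.
apply: (iffP existsP) => [[y /andP [y0 /eqP ->]] | [x0 [y xy]]].
  by split; [rewrite expf_neq0 | exists y].
exists y; rewrite -xy eqxx andbT.
by apply: contraNneq x0 => y0; rewrite xy y0 expr0n.
Qed.

Lemma isQ_form (x : F) : isQ x -> exists2 s, s != 0 & x = s ^+ 2.
Proof. by case/existsP=> y /andP [y0 /eqP ->]; exists y. Qed.

Lemma isQbarP (x : F) : isQbar x -> x != 0 /\ ~ square x.
Proof. by case/andP=> x0 xQ; split => // sx; case/negP: xQ; apply/isQP. Qed.

Lemma isQ0 : isQ (0 : F) = false.
Proof. by apply/negbTE/negP => /isQP []; rewrite eqxx. Qed.

Lemma isQbar0 : isQbar (0 : F) = false.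
Proof. by rewrite /isQbar eqxx. Qed.

Lemma square_mul (x y : F) : square x -> square y -> square (x * y).
Proof. by move=> [u ->] [v ->]; exists (u * v); rewrite exprMn. Qed.

Lemma square_cancel (u v : F) : u != 0 -> square u -> square (u * v) -> square v.
Proof.
move=> u0 [w uw] [z uvz]; exists (z / w).
have w0 : w != 0 by apply: contraNneq u0 => w0; rewrite uw w0 expr0n.
by rewrite expr_div_n -uvz uw mulrAC mulfV ?expf_neq0 ?mul1r.
Qed.

Lemma finField_generator :
  exists2 z : F, z != 0 & forall x, x != 0 -> exists k, x = z ^+ k.
Proof.
set n := #|F|.-1.
have card_gt1 := finNzRing_gt1 F.
have n_gt0 : (0 < n)%N by rewrite /n -ltnS prednK // ltnW.
have unit_n (x : F) : x != 0 -> x ^+ n = 1.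
  move=> x0; apply: (mulfI x0); rewrite mulr1 -exprS /n prednK ?expf_card //.
  exact: ltnW.
have /hasP [z _ zprim] : has n.-primitive_root (enum (predC1 (0 : F))).
  apply: cyclic.has_prim_root => //; last by rewrite -cardE cardC1.
    by apply/allP=> x; rewrite mem_enum => x0; rewrite unity_rootE unit_n.
  exact: enum_uniq.
exists z => [|x x0]; last by have [k ->] := prim_rootP zprim (unit_n _ x0); exists k.
apply/eqP=> z0; have := prim_expr_order zprim.
by rewrite z0 expr0n gtn_eqF //= => /eqP; rewrite eq_sym oner_eq0.
Qed.

(* In a finite field the product of two nonsquares is a square: both are odd powers of a
   generator. *)
Lemma nonsquare_mul (u v : F) : isQbar u -> isQbar v -> isQ (u * v).
Proof.
move=> /isQbarP [u0 uQ] /isQbarP [v0 vQ].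
have [z _ zgen] := finField_generator.
have even_square k : ~~ odd k -> square (z ^+ k).
  move=> k_even; exists (z ^+ k./2).
  by rewrite -exprM muln2 -{1}(odd_double_half k) (negbTE k_even).
have [j uj] := zgen _ u0; have [k vk] := zgen _ v0.
have j_odd : odd j by apply/negPn/negP => /even_square; rewrite -uj.
have k_odd : odd k by apply/negPn/negP => /even_square; rewrite -vk.
apply/isQP; split; first by rewrite mulf_neq0.
by rewrite uj vk -exprD; apply: even_square; rewrite oddD j_odd k_odd.
Qed.

Lemma isQbar_form (nu x : F) : isQbar nu -> isQbar x -> exists2 s, s != 0 & x = nu * s ^+ 2.
Proof.
move=> nuQ xQ; have [k k0 xnu] := isQ_form (nonsquare_mul xQ nuQ).
have nu0 : nu != 0 by case/andP: nuQ.
exists (k / nu); first by rewrite mulf_neq0 ?invr_eq0.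
by rewrite expr_div_n -xnu; field.
Qed.

(* Companion matrix of X^2 - t X + D: Cc D t is its class. *)
Definition companion (D t : F) : 'M[F]_2 := mx2 0 (- D) 1 t.

Definition Cbar_rep (nu t : F) : 'M[F]_2 := mx2 0 (- (t ^+ 2 / (4%:R * nu))) nu t.
Definition Dc_rep (t : F) : 'M[F]_2 := mx2 (t / 2%:R) 0 0 (t / 2%:R).

Lemma det_companion (D t : F) : \det (companion D t) = D.
Proof. by rewrite det_mx2; ring. Qed.

Lemma tr_companion (D t : F) : \tr (companion D t) = t.
Proof. by rewrite tr_mx2 add0r. Qed.

Lemma tr_Cbar_rep (nu t : F) : \tr (Cbar_rep nu t) = t.
Proof. by rewrite tr_mx2 add0r. Qed.

Definition disc (a b c e : F) : F := (a + e) ^+ 2 - 4%:R * (a * e - b * c).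

Definition qform (a b c e x y : F) : F := c * y ^+ 2 + (a - e) * x * y - b * x ^+ 2.

Definition intertwiner (a b c e x y : F) : 'M[F]_2 :=
  mx2 (y * c - x * e) (x * b - y * a) x y.

Lemma intertwinerP (a b c e x y : F) :
  intertwiner a b c e x y *m mx2 a b c e
  = companion (a * e - b * c) (a + e) *m intertwiner a b c e x y.
Proof. by rewrite !mx2_mul; congr mx2; ring. Qed.

Lemma det_intertwiner (a b c e x y : F) :
  \det (intertwiner a b c e x y) = qform a b c e x y.
Proof. by rewrite det_mx2 /qform; ring. Qed.

Lemma qform_div (a b c e x y s : F) : s != 0 ->
  qform a b c e (x / s) (y / s) = qform a b c e x y / s ^+ 2.
Proof. by move=> s0; rewrite /qform; field. Qed.

Lemma qform_complete_square (a b c e x y : F) :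
  4%:R * c * qform a b c e x y
  = (2%:R * c * y + (a - e) * x) ^+ 2 - disc a b c e * x ^+ 2.
Proof. by rewrite /qform /disc; ring. Qed.

Lemma conj_lower_left (a b c e : F) (P B : 'M[F]_2) :
  P *m B = mx2 a b c e *m P -> \det P * B i1 i0 = qform a b c e (- P i1 i0) (P i0 i0).
Proof.
rewrite {1 2}[P]mx2_eta {1}[B]mx2_eta !mx2_mul => /mx2_inj [e00 _ e10 _].
rewrite {1}[P]mx2_eta det_mx2.
transitivity (P i0 i0 * (P i1 i0 * B i0 i0 + P i1 i1 * B i1 i0)
              - P i1 i0 * (P i0 i0 * B i0 i0 + P i0 i1 * B i1 i0)); first by ring.
by rewrite e00 e10 /qform; ring.
Qed.

Lemma mem_Cc_of_value (a b c e x y s : F) : s != 0 -> qform a b c e x y = s ^+ 2 ->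
  mx2 a b c e \in Cc (a * e - b * c) (a + e).
Proof.
move=> s0 hQ.
apply: (mem_conj_class_via (intertwinerP a b c e (x / s) (y / s)) (R := 1%:M)).
- by rewrite mul1mx mulmx1.
- exact: unitmx1.
- by rewrite det_intertwiner qform_div // hQ divff ?expf_neq0 // det1.
Qed.

Lemma Cc_inj (D1 D2 t1 t2 : F) : Cc D1 t1 = Cc D2 t2 -> D1 = D2 /\ t1 = t2.
Proof. by move/conj_class_det_tr; rewrite !det_companion !tr_companion. Qed.

Lemma Cbar_inj (nu t1 t2 : F) : Cbar nu t1 = Cbar nu t2 -> t1 = t2.
Proof. by case/conj_class_det_tr => _; rewrite !tr_Cbar_rep. Qed.

Lemma Cc_neq_Dc (D t t' : F) : Cc D t <> Dc t'.
Proof.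
move=> e; have : companion D t \in Dc t' by rewrite -e mem_conj_class.
by move/scalar_class_lower_left; rewrite mxE /=; apply/eqP; rewrite oner_eq0.
Qed.

Lemma Cbar_neq_Dc (nu t t' : F) : nu != 0 -> Cbar nu t <> Dc t'.
Proof.
move=> nu0 e; have : Cbar_rep nu t \in Dc t' by rewrite -e mem_conj_class.
by move/scalar_class_lower_left; rewrite mxE /=; apply/eqP.
Qed.

Lemma two_neq0_of_card (p l : nat) :
  prime p -> odd p -> #|F| = (p ^ l)%N -> (2%:R : F) != 0.
Proof.
move=> p_prime p_odd cardF; have pchar := card_finPcharP cardF p_prime.
rewrite -(dvdn_pcharf pchar) dvdn_prime2 //.
by apply: contraTneq p_odd => ->.
Qed.

Section OddCharacteristic.
Hypothesis two_neq0 : (2%:R : F) != 0.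
Variable i : F.
Hypothesis hi : i ^+ 2 = -1.

Lemma four_neq0 : (4%:R : F) != 0.
Proof. by rewrite -[4%N]/(2 * 2)%N natrM mulf_neq0. Qed.

Lemma i_neq0 : i != 0.
Proof. by apply: contra_eq_neq hi => ->; rewrite expr0n eq_sym oppr_eq0 oner_eq0. Qed.

(* Since -1 is a square, x and -x lie in the same square class. *)
Lemma square_opp (x : F) : square x -> square (- x).
Proof. by move=> sx; rewrite -mulN1r; apply: square_mul sx; exists i. Qed.

Lemma isQbarN (x : F) : isQbar x -> isQbar (- x).
Proof.
move=> /isQbarP [x0 xQ]; apply/andP; split; first by rewrite oppr_eq0.
by apply/negP => /isQP [_ /square_opp]; rewrite opprK.
Qed.

Lemma qform_represents_square (a b c e : F) : disc a b c e != 0 ->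
  exists x y s, s != 0 /\ qform a b c e x y = s ^+ 2.
Proof.
move=> d0; have [c0 | c0] := eqVneq c 0.
  have ae0 : a - e != 0.
    apply: contraNneq d0 => /eqP; rewrite subr_eq0 => /eqP ->.
    by apply/eqP; rewrite /disc c0; ring.
  by exists 1, ((1 + b) / (a - e)), 1; split; rewrite ?oner_neq0 // /qform c0; field.
have [/isQ_form [s s0 cs] | cQ] := boolP (isQ c).
  by exists 0, 1, s; split; rewrite // /qform cs; ring.
have c4 : 4%:R * c != 0 by rewrite mulf_neq0 ?four_neq0.
have [/isQ_form [g g0 dg] | dQ] := boolP (isQ (disc a b c e)).
  (* the form is hyperbolic: solve (2cy + (a-e)x)^2 - g^2 x^2 = 4c *)
  exists ((c - 1) / g), (((1 + c) - (a - e) * ((c - 1) / g)) / (2%:R * c)), 1.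
  split; first exact: oner_neq0.
  by apply: (mulfI c4); rewrite qform_complete_square dg; field; rewrite g0 c0 two_neq0.
(* otherwise -disc and c are nonsquares, so -disc * c = k^2, and q(1, -(a-e)/2c) = k^2/4c^2 *)
have cQbar : isQbar c by rewrite /isQbar c0 cQ.
have dQbar : isQbar (- disc a b c e) by apply: isQbarN; rewrite /isQbar d0 dQ.
have [k k0 hk] := isQ_form (nonsquare_mul dQbar cQbar).
exists 1, (- (a - e) / (2%:R * c)), (k / (2%:R * c)).
split; first by rewrite mulf_neq0 ?invr_eq0 ?mulf_neq0.
apply: (mulfI c4); rewrite qform_complete_square expr_div_n -hk.
by field; rewrite c0 two_neq0.
Qed.

Lemma nondegenerate_mem_Cc (a b c e : F) : disc a b c e != 0 ->
  mx2 a b c e \in Cc (a * e - b * c) (a + e).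
Proof.
by case/qform_represents_square => x [y [s [s0 hQ]]]; apply: mem_Cc_of_value s0 hQ.
Qed.

(* In the degenerate case -bc = ((a - e)/2)^2, so bc is a square since -1 is one. *)
Lemma degenerate_square_bc (a b c e : F) : disc a b c e = 0 -> square (b * c).
Proof.
move=> d0; exists (i * (a - e) / 2%:R); apply/eqP; rewrite -subr_eq0.
have -> : b * c - (i * (a - e) / 2%:R) ^+ 2 = disc a b c e / 4%:R.
  by rewrite /disc expr_div_n exprMn hi; field; rewrite four_neq0.
by rewrite d0 mul0r.
Qed.

Lemma degenerate_no_mix (a b c e : F) : disc a b c e = 0 ->
  ~~ ((isQ b && isQbar c) || (isQbar b && isQ c)).
Proof.
move/degenerate_square_bc=> sbc; apply/negP; case/orP => /andP [h1 h2].
  have [b0 sb] := isQP _ h1; have [_ nc] := isQbarP h2.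
  exact: nc (square_cancel b0 sb sbc).
have [c0 sc] := isQP _ h2; have [_ nb] := isQbarP h1.
by apply: nb (square_cancel c0 sc _); rewrite mulrC.
Qed.

(* A degenerate form represents c, and also -b when c = 0. *)
Lemma degenerate_mem_Cc (a b c e : F) : disc a b c e = 0 -> isQ b || isQ c ->
  mx2 a b c e \in Cc (a * e - b * c) (a + e).
Proof.
move=> d0 bcQ; have [c0 | c0] := eqVneq c 0.
  have bQ : isQ b by move: bcQ; rewrite c0 isQ0 orbF.
  have [s s0 bs] := isQ_form bQ.
  apply: (mem_Cc_of_value (x := 1) (y := 0) (s := i * s)).
    by rewrite mulf_neq0 ?i_neq0.
  by rewrite /qform bs c0 exprMn hi; ring.
have [/isQ_form [s s0 cs] | cQ] := boolP (isQ c).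
  by apply: (mem_Cc_of_value (x := 0) (y := 1) (s := s)); rewrite // /qform cs; ring.
have bQ : isQ b by move: bcQ; rewrite (negbTE cQ) orbF.
by case/negP: (degenerate_no_mix d0); rewrite bQ /isQbar c0 cQ.
Qed.

Lemma Cbar_companion (nu D t : F) : nu != 0 -> t ^+ 2 = 4%:R * D ->
  mx2 nu 0 0 1 *m Cbar_rep nu t = companion D t *m mx2 nu 0 0 1.
Proof.
move=> nu0 tD; rewrite !mx2_mul; congr mx2; try ring.
by rewrite tD; field; rewrite nu0 four_neq0.
Qed.

Lemma mem_Cbar_of_value (nu a b c e x y s : F) : nu != 0 -> s != 0 ->
  disc a b c e = 0 -> qform a b c e x y = nu * s ^+ 2 -> mx2 a b c e \in Cbar nu (a + e).
Proof.
move=> nu0 s0 d0 hQ.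
have tD : (a + e) ^+ 2 = 4%:R * (a * e - b * c).
  by apply/eqP; rewrite -subr_eq0 -/(disc _ _ _ _) d0.
apply: (mem_conj_class_via (intertwinerP a b c e (x / s) (y / s)) (Cbar_companion nu0 tD)).
  by rewrite unitmxE det_mx2 unitfE mulr1 mulr0 subr0.
by rewrite det_intertwiner qform_div // hQ det_mx2 mulr1 mulr0 subr0 mulfK ?expf_neq0.
Qed.

Lemma degenerate_mem_Dc (a b c e : F) : disc a b c e = 0 -> b = 0 -> c = 0 ->
  mx2 a b c e \in Dc (a + e).
Proof.
move=> d0 b0 c0; have ae : a = e.
  apply/eqP; rewrite -subr_eq0 -sqrf_eq0 -d0 /disc b0 c0; apply/eqP; ring.
rewrite b0 c0 -ae /Dc (_ : (a + a) / 2%:R = a) ?mem_conj_class //.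
by field; rewrite two_neq0.
Qed.

(* In the degenerate case the square class of the lower-left entry is a conjugacy invariant:
   4 c det(P) c' is a square by completing the square, and 4, det P = +-1 and c are squares. *)
Lemma degenerate_lower_left_isQ (a b c e : F) (B : 'M[F]_2) : disc a b c e = 0 ->
  B \in conj_class (mx2 a b c e) -> isQ c -> B i1 i0 != 0 -> isQ (B i1 i0).
Proof.
move=> d0 /conj_classP [P hP hPB] /isQP [c0 sc] c'0; apply/isQP; split => //.
have sP : square (\det P) by case/orP: hP => /eqP ->; [exists 1; rewrite expr1n | exists i].
have s4 : square (4%:R : F) by exists 2%:R; rewrite -natrX.
have n4cP : 4%:R * c * \det P != 0 by rewrite !mulf_neq0 ?four_neq0 ?inESL_det_neq0.
apply: (square_cancel n4cP); first by apply: square_mul sP; apply: square_mul.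
rewrite -mulrA (conj_lower_left hPB) qform_complete_square d0 mul0r subr0.
by exists (2%:R * c * P i0 i0 + (a - e) * - P i1 i0).
Qed.

Lemma det_Cbar_rep (nu t : F) : nu != 0 -> \det (Cbar_rep nu t) = t ^+ 2 / 4%:R.
Proof. by move=> nu0; rewrite det_mx2; field; rewrite nu0 four_neq0. Qed.

Lemma det_Dc_rep (t : F) : \det (Dc_rep t) = t ^+ 2 / 4%:R.
Proof. by rewrite det_mx2; field; rewrite four_neq0. Qed.

Lemma tr_Dc_rep (t : F) : \tr (Dc_rep t) = t.
Proof. by rewrite tr_mx2; field; rewrite two_neq0. Qed.

Lemma Dc_inj (t1 t2 : F) : Dc t1 = Dc t2 -> t1 = t2.
Proof. by case/conj_class_det_tr => _; rewrite !tr_Dc_rep. Qed.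

Lemma signs_card : #|signs F| = 2.
Proof.
rewrite cards2 (_ : (1 : F) != -1) //; apply: contra_neq two_neq0 => e.
by rewrite mulr2n {2}e subrr.
Qed.

(* The four traces of degenerate matrices of determinant +-1 are pairwise distinct:
   +-2 square to 4, +-2i square to -4, and 4, 2 and 2i are nonzero. *)
Lemma T4_card : #|T4 i| = 4.
Proof.
have two_i0 : 2%:R * i != 0 by rewrite mulf_neq0 ?i_neq0.
have opp_neq (x : F) : x != 0 -> x != - x.
  move=> x0; apply: contra_neq (mulf_neq0 two_neq0 x0) => e.
  by rewrite mulr_natl mulr2n {1}e addNr.
have sq_neq (x y : F) : x ^+ 2 != y ^+ 2 -> x != y by apply: contra_neq => ->.
have sq4 : (2%:R : F) ^+ 2 != (2%:R * i) ^+ 2.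
  by rewrite exprMn hi mulrN1 opp_neq // expf_neq0.
have e : T4 i =i [:: 2%:R; - 2%:R; 2%:R * i; - (2%:R * i)].
  by move=> x; rewrite !inE orbA orbA.
rewrite (eq_card e); apply/card_uniqP; rewrite /= !inE !negb_or /= !andbT.
by apply/and3P; split; [apply/and3P; split | apply/andP; split | ];
  rewrite ?opp_neq // sq_neq // ?sqrrN.
Qed.

Lemma T4_of_degenerate (D t : F) : D \in signs F -> t ^+ 2 = 4%:R * D -> t \in T4 i.
Proof.
have sq2 : (2%:R : F) ^+ 2 = 4%:R by rewrite -natrX.
rewrite !inE => /orP [] /eqP -> ht.
  by have := eqxx (t ^+ 2); rewrite {2}ht mulr1 -sq2 eqf_sqr => /orP [] ->; rewrite ?orbT.
have := eqxx (t ^+ 2); rewrite {2}ht mulrN1 -sq2 -mulrN1 -hi -exprMn eqf_sqr.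
by case/orP => ->; rewrite ?orbT.
Qed.

Lemma T4_det (t : F) : t \in T4 i -> t ^+ 2 / 4%:R \in signs F.
Proof.
have sq2 : (2%:R : F) ^+ 2 = 4%:R by rewrite -natrX.
have sq2i : (2%:R * i) ^+ 2 = - 4%:R by rewrite exprMn hi sq2 mulrN1.
rewrite !inE -!orbA => /or4P [] /eqP ->;
by rewrite ?sqrrN ?sq2i ?sq2 ?mulNr divff ?four_neq0 ?eqxx ?orbT.
Qed.

Variable nu : F.
Hypothesis nuQ : isQbar nu.

Lemma degenerate_mem_Cbar (a b c e : F) : disc a b c e = 0 ->
  isQbar b || isQbar c -> mx2 a b c e \in Cbar nu (a + e).
Proof.
move=> d0 bcQ; have nu0 : nu != 0 by case/andP: nuQ.
have [c0 | c0] := eqVneq c 0.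
  have bQ : isQbar b by move: bcQ; rewrite c0 isQbar0 orbF.
  have [s s0 bs] := isQbar_form nuQ (isQbarN bQ).
  by apply: (mem_Cbar_of_value (x := 1) (y := 0) nu0 s0 d0); rewrite -bs /qform c0; ring.
have [cQ | cQ] := boolP (isQ c).
  have bQ : isQbar b by move: bcQ; rewrite /isQbar cQ andbF orbF.
  by case/negP: (degenerate_no_mix d0); rewrite bQ cQ orbT.
have [s s0 cs] : exists2 s, s != 0 & c = nu * s ^+ 2.
  by apply: isQbar_form; rewrite // /isQbar c0 cQ.
by apply: (mem_Cbar_of_value (x := 0) (y := 1) nu0 s0 d0); rewrite -cs /qform; ring.
Qed.

(* C_{D,t} and Cbar_t' differ: otherwise both are degenerate with the same invariants, and
   the square class of the lower-left entry (1 versus nu) would be preserved. *)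
Lemma Cc_neq_Cbar (D t t' : F) : Cc D t <> Cbar nu t'.
Proof.
move: nuQ => /andP [nu0 nuQbar] e; have [eD et] := conj_class_det_tr e.
rewrite det_companion det_Cbar_rep // tr_companion tr_Cbar_rep in eD et.
have d0 : disc 0 (- D) 1 t = 0 by rewrite /disc eD et; field; rewrite four_neq0.
have Q1 : isQ (1 : F) by apply/isQP; split; [exact: oner_neq0 | exists 1; rewrite expr1n].
have : Cbar_rep nu t' \in Cc D t by rewrite e mem_conj_class.
move/(degenerate_lower_left_isQ d0) => /(_ Q1).
by rewrite mxE /= (negbTE nuQbar) => /(_ nu0).
Qed.

Lemma class_criterion (A : 'M[F]_2) :
  let D := \det A in let t := \tr A in
  let b := A i0 i1 in let c := A i1 i0 in
  (t ^+ 2 - 4%:R * D != 0 -> A \in Cc D t)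
  /\ (t ^+ 2 - 4%:R * D = 0 ->
        ((isQ b || isQ c) -> A \in Cc D t)
        /\ ((isQbar b || isQbar c) -> A \in Cbar nu t)
        /\ (b = 0 /\ c = 0 -> A \in Dc t)
        /\ ~ ((isQ b && isQbar c) || (isQbar b && isQ c))).
Proof.
move=> D t b c; rewrite {}/D {}/t {}/b {}/c [A]mx2_eta det_mx2 tr_mx2 !mxE /=.
move: (A i0 i0) (A i0 i1) (A i1 i0) (A i1 i1) => a b c e.
split; first exact: nondegenerate_mem_Cc.
move=> d0; split; first exact: degenerate_mem_Cc.
split; first exact: degenerate_mem_Cbar.
split; first by case; apply: degenerate_mem_Dc.
by apply/negP; apply: degenerate_no_mix d0.
Qed.

Definition listed_classes : {set {set 'M[F]_2}} :=
  [set Cc D t | D in signs F, t in [set: F]] :|: [set Cbar nu t | t in T4 i]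
    :|: [set Dc t | t in T4 i].

Lemma ESL_class_listed (A : 'M[F]_2) : inESL A -> conj_class A \in listed_classes.
Proof.
move=> hA; have [nondeg deg] := class_criterion A.
have via (X : {set 'M[F]_2}) (M : 'M[F]_2) : A \in X -> X = conj_class M ->
    X \in listed_classes -> conj_class A \in listed_classes.
  by move=> AX XM; rewrite XM in AX *; rewrite (conj_class_eq AX).
have DA : \det A \in signs F by rewrite !inE.
have inCc : A \in Cc (\det A) (\tr A) -> conj_class A \in listed_classes.
  by move/via => /(_ _ erefl); apply; rewrite !in_setU imset2_f ?inE.
have [d0 | d0] := eqVneq (\tr A ^+ 2 - 4%:R * \det A) 0; last exact: inCc (nondeg d0).
have [bcQ [bcQbar [bc0 _]]] := deg d0.
have tT : \tr A \in T4 i by apply: T4_of_degenerate DA _; apply/eqP; rewrite -subr_eq0 d0.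
have [Q | nQ] := boolP (isQ (A i0 i1) || isQ (A i1 i0)); first exact: inCc (bcQ Q).
have [Qbar | nQbar] := boolP (isQbar (A i0 i1) || isQbar (A i1 i0)).
  by apply: via (bcQbar Qbar) erefl _; rewrite !in_setU imset_f ?orbT.
have zero (x : F) : ~~ isQ x -> ~~ isQbar x -> x = 0.
  by move=> xQ; rewrite /isQbar xQ andbT negbK => /eqP.
move: nQ nQbar; rewrite !negb_or => /andP [bQ cQ] /andP [bQbar cQbar].
apply: via (bc0 (conj (zero _ bQ bQbar) (zero _ cQ cQbar))) erefl _.
by rewrite !in_setU imset_f ?orbT.
Qed.

Lemma ESL_classes_eq : ESL_classes F = listed_classes.
Proof.
have nu0 : nu != 0 by case/andP: nuQ.
apply/setP=> X; apply/imsetP/idP => [[A hA ->] | ].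
  by apply: ESL_class_listed; rewrite inE in hA.
rewrite !in_setU => /orP [/orP [/imset2P [D t DS _ ->] | /imsetP [t tT ->]] | /imsetP [t tT ->]].
- exists (companion D t) => //; rewrite inE /inESL det_companion.
  by move: DS; rewrite !inE.
- exists (Cbar_rep nu t) => //; rewrite inE /inESL det_Cbar_rep //.
  by move: (T4_det tT); rewrite !inE.
- exists (Dc_rep t) => //; rewrite inE /inESL det_Dc_rep.
  by move: (T4_det tT); rewrite !inE.
Qed.

Lemma card_listed_classes : #|listed_classes| = (2 * #|F| + 8)%N.
Proof.
have nu0 : nu != 0 by case/andP: nuQ.
rewrite !card_setU_disjoint; first last.
- move=> X; case/setUP => [|/imsetP [t _ ->]]; [case/imset2P => D t _ _ -> |];
    apply/imsetP => [[t' _]].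
    exact: Cc_neq_Dc.
  exact: Cbar_neq_Dc.
- move=> X; case/imset2P => D t _ _ ->; apply/imsetP => [[t' _]].
  exact: Cc_neq_Cbar.
rewrite curry_imset2X !card_in_imset ?cardsX ?cardsT ?signs_card ?T4_card -?addnA //.
- by move=> t1 t2 _ _; apply: Dc_inj.
- by move=> t1 t2 _ _; apply: Cbar_inj.
by move=> [D1 t1] [D2 t2] _ _ /= /Cc_inj [-> ->].
Qed.

End OddCharacteristic.
End ConjugacyClasses.

Theorem mainTheorem4 (F : finFieldType) (p l : nat)
  (hp : prime p) (hodd : odd p) (hl : (0 < l)%N)
  (hN : #|F| = (p ^ l)%N) (hmod : (#|F| %% 4 = 1)%N)
  (i : F) (hi : i ^+ 2 = -1) (nu : F) (hnu : isQbar nu) :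
  (* the conjugacy classes are exactly the listed ones *)
  ESL_classes F =
    [set Cc D t | D in signs F, t in [set: F]] :|: [set Cbar nu t | t in T4 i]
      :|: [set Dc t | t in T4 i]
  /\ #|ESL_classes F| = (2 * #|F| + 8)%N
  (* pairwise distinctness *)
  /\ (forall D1 D2 t1 t2, D1 \in signs F -> D2 \in signs F ->
        Cc D1 t1 = Cc D2 t2 -> D1 = D2 /\ t1 = t2)
  /\ {in T4 i &, injective (Cbar nu)}
  /\ {in T4 i &, injective (@Dc F)}
  /\ (forall D t t', D \in signs F -> t' \in T4 i ->
        Cc D t <> Cbar nu t' /\ Cc D t <> Dc t')
  /\ (forall t t', t \in T4 i -> t' \in T4 i -> Cbar nu t <> Dc t')
  (* membership criteria *)
  /\ (forall A : 'M[F]_2, inESL A ->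
        let D := \det A in let t := \tr A in
        let b := A i0 i1 in let c := A i1 i0 in
        (t ^+ 2 - 4%:R * D != 0 -> A \in Cc D t)
        /\ (t ^+ 2 - 4%:R * D = 0 ->
              ((isQ b || isQ c) -> A \in Cc D t)
              /\ ((isQbar b || isQbar c) -> A \in Cbar nu t)
              /\ (b = 0 /\ c = 0 -> A \in Dc t)
              /\ ~ ((isQ b && isQbar c) || (isQbar b && isQ c)))).
Proof.
have two0 := two_neq0_of_card hp hodd hN.
have nu0 : nu != 0 by case/andP: hnu.
have classes := ESL_classes_eq two0 hi hnu.
split; first exact: classes.
split; first by rewrite classes card_listed_classes.
split; first by move=> D1 D2 t1 t2 _ _; apply: Cc_inj.
split; first by move=> t1 t2 _ _; apply: Cbar_inj.
split; first by move=> t1 t2 _ _; apply: (Dc_inj two0).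
split; first by move=> D t t' _ _; split; [exact: (Cc_neq_Cbar two0 hi hnu) | exact: Cc_neq_Dc].
split; first by move=> t t' _ _; exact: (Cbar_neq_Dc nu0).
by move=> A _; exact: (class_criterion two0 hi hnu).
Qed.
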